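(* Let $r\geqslant 2$, $\ell\geqslant 1$ and $m=2^r(2^\ell+1)$. Then: (i) $L_1(x^{m-1})=x^{2^r-1}+\left(1+\sum_{k=r}^{r+\ell-1}x^{2^k}\right)\sum_{k=0}^{r-1}x^{2^k-1}$; (ii) $x^2\,(L_1(x^{m-1}))'=P_r(x)^2+P_\ell(x)^{2^r}P_{r-1}(x)^2$; (iii) if $\tau$ is a root of $(L_1(x^{m-1}))'$ in $\overline{\mathbb F}_2$, then $P_{r-1}(\tau)\neq 0$; (iv) if $\tau_i,\tau_j$ are distinct roots of $(L_1(x^{m-1}))'$ with $P_\ell(\tau_i+\tau_j)=0$, then $P_{r-1}(\tau_i+\tau_j)\neq 0$ and $$P_\ell(\tau_i)^{2^{r-1}}=\frac{P_r(\tau_i)}{P_{r-1}(\tau_i)}=\frac{P_r(\tau_i+\tau_j)}{P_{r-1}(\tau_i+\tau_j)}=\frac{P_r(\tau_j)}{P_{r-1}(\tau_j)}=P_\ell(\tau_j)^{2^{r-1}}.$$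
   Context: Here $P_0=0$ and, for $k\geqslant 1$, $P_k(x)=x+x^2+\dots+x^{2^{k-1}}$ is the $k$-th trace polynomial over $\mathbb F_2$. For $m\equiv 0\pmod 4$, $L_1(x^{m-1})$ denotes the unique polynomial $Q$ of degree at most $(m-2)/2$ over $\mathbb F_2$ with $Q(x(x+1))=(x+1)^{m-1}+x^{m-1}$. *)

From mathcomp Require Import all_boot all_order all_algebra closed_field.
Set Implicit Arguments. Unset Strict Implicit. Unset Printing Implicit Defensive.
Import GRing.Theory.
Local Open Scope ring_scope.

Definition F2bar_sig := countable_algebraic_closure ('F_2 : countFieldType).
Definition F2bar : closedFieldType := projT1 F2bar_sig.
Definition F2emb : {rmorphism 'F_2 -> F2bar} := sval (projT2 F2bar_sig).

Definition Ptr (R : nzRingType) (k : nat) : {poly R} := \sum_(i < k) 'X^(2 ^ i).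

(* Q is L_1(x^(m-1)): deg Q <= (m-2)/2 and Q(x(x+1)) = (x+1)^(m-1) + x^(m-1) over F_2. *)
Definition is_L1 (m : nat) (Q : {poly 'F_2}) : Prop :=
  (size Q <= ((m - 2) %/ 2).+1)%N /\
  Q \Po ('X * ('X + 1)) = ('X + 1) ^+ (m - 1) + 'X ^+ (m - 1).

From mathcomp Require Import all_boot all_order all_algebra closed_field.
From mathcomp Require Import ring zify.
Set Implicit Arguments. Unset Strict Implicit. Unset Printing Implicit Defensive.
Import GRing.Theory.
Local Open Scope ring_scope.

(* Over a ring of characteristic 2 put y = x(x+1).  The sums of y^(2^k) telescope,
   sum_(a <= k < b) y^(2^k) = x^(2^b) + x^(2^a), and multiplying the candidate
   L_1(x^(m-1)) by y turns the identity Q(y) = (x+1)^(m-1) + x^(m-1) into a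
   polynomial identity in x^(2^r) and x^(2^(r+l)); uniqueness holds because
   composition with the quadratic y is injective.  In characteristic 2 the
   derivative only keeps odd powers, and x^2 Q' is a sum of squares; at a root
   tau of Q' it gives P_r(tau) = P_l(tau)^(2^(r-1)) P_(r-1)(tau).  If P_(r-1)
   vanished there, so would P_r, forcing tau^(2^(r-1)) = 0 although Q'(0) = 1.
   Part (iv) is the same relation at ti + tj, obtained from the additivity of
   the trace polynomials. *)

Definition L1poly (R : nzSemiRingType) (r l : nat) : {poly R} :=
  'X^(2 ^ r - 1)
  + (1 + \sum_(r <= k < r + l) 'X^(2 ^ k)) * \sum_(k < r) 'X^(2 ^ k - 1).

Section Char2.
Variable R : comNzRingType.
Hypothesis pchar2 : (2 \in [pchar R])%N.

Lemma natr_pchar2 n : (n%:R : R) = (odd n)%:R.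
Proof. by rewrite -(GRing.natr_mod_pchar pchar2) modn2. Qed.

(* Lets [ring] prove identities that only hold modulo 2. *)
Lemma eq_pchar2 (u v w : R) : u - v = 2%:R * w -> u = v.
Proof. by move=> uv; apply/eqP; rewrite -subr_eq0 uv (pcharf0 pchar2) mul0r. Qed.

Lemma exprD_pow2_pchar2 n (u v : R) :
  (u + v) ^+ (2 ^ n) = u ^+ (2 ^ n) + v ^+ (2 ^ n).
Proof. by apply: exprDn_pchar; rewrite pnatX (pnatE _ (isT : prime 2)) pchar2. Qed.

Lemma expr_sum_pow2_pchar2 n k (F : nat -> R) :
  (\sum_(i < k) F i) ^+ (2 ^ n) = \sum_(i < k) F i ^+ (2 ^ n).
Proof.
elim: k => [|k IH]; first by rewrite !big_ord0 expr0n expn_eq0.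
by rewrite !big_ord_recr /= exprD_pow2_pchar2 IH.
Qed.

Lemma sum_pow2_mul_addr1 (x : R) a b : (a <= b)%N ->
  \sum_(a <= i < b) (x * (x + 1)) ^+ (2 ^ i) = x ^+ (2 ^ b) + x ^+ (2 ^ a).
Proof.
move=> /subnK <-; elim: (b - a)%N => [|n IH].
  by rewrite add0n big_geq // addrr_pchar2.
rewrite addSn big_nat_recr ?leq_addl //= IH exprMn exprD_pow2_pchar2 expr1n.
rewrite expnSr exprM; apply: (eq_pchar2 (w := x ^+ (2 ^ (n + a)))); ring.
Qed.

Lemma horner_PtrD k (a b : R) : (Ptr R k).[a + b] = (Ptr R k).[a] + (Ptr R k).[b].
Proof.
rewrite /Ptr !horner_sum -big_split /=; apply: eq_bigr => i _.
by rewrite !hornerXn exprD_pow2_pchar2.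
Qed.

Lemma horner_Ptr_add_eq0 k (a b : R) :
  (Ptr R k).[a + b] = 0 -> (Ptr R k).[a] = (Ptr R k).[b].
Proof.
by rewrite horner_PtrD => /eqP; rewrite addr_eq0 (oppr_pchar2 pchar2) => /eqP.
Qed.

End Char2.

Lemma horner_PtrS (R : nzRingType) k (t : R) :
  (Ptr R k.+1).[t] = (Ptr R k).[t] + t ^+ (2 ^ k).
Proof. by rewrite /Ptr big_ord_recr /= hornerD hornerXn. Qed.

Section Char2Poly.
Variable R : comNzRingType.
Hypothesis pchar2 : (2 \in [pchar R])%N.

Let pchar2_poly : (2 \in [pchar {poly R}])%N.
Proof. by rewrite pchar_poly. Qed.

Lemma derivXn_pchar2 n : ('X^n : {poly R})^`() = 'X^(n.-1) *+ odd n.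
Proof. by rewrite derivXn -mulr_natr (natr_pchar2 pchar2_poly) mulr_natr. Qed.

Lemma derivXpow2B1 k : ('X^(2 ^ k - 1) : {poly R})^`() = 'X^(2 ^ k - 2) *+ (0 < k)%N.
Proof.
rewrite derivXn_pchar2 oddB ?expn_gt0 // oddX; case: k => //= k.
by rewrite -subnS.
Qed.

Lemma Ptr_expr_pow2 k n : Ptr R k ^+ (2 ^ n) = \sum_(i < k) 'X^(2 ^ (i + n)).
Proof.
rewrite /Ptr (expr_sum_pow2_pchar2 pchar2_poly n k (fun i => 'X^(2 ^ i))).
by apply: eq_bigr => i _; rewrite -exprM -expnD.
Qed.

Lemma deriv_L1poly r l : (0 < r)%N ->
  (L1poly R r l)^`() = 'X^(2 ^ r - 2)
    + (1 + \sum_(r <= k < r + l) 'X^(2 ^ k)) * \sum_(k < r) 'X^(2 ^ k - 2) *+ (0 < k)%N.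
Proof.
move=> r0; have dS : (\sum_(r <= k < r + l) 'X^(2 ^ k) : {poly R})^`() = 0.
  rewrite raddf_sum /= big_nat big1 // => k /andP[rk _].
  by case: k rk => [|k] rk; [lia | rewrite derivXn_pchar2 oddX mulr0n].
rewrite /L1poly derivD derivM derivD -polyC1 derivC dS addr0 mul0r add0r.
rewrite derivXpow2B1 r0 raddf_sum /=; congr (_ + _ * _).
by apply: eq_bigr => k _; rewrite derivXpow2B1.
Qed.

Lemma mulX2_deriv_L1poly r l : (0 < r)%N ->
  'X^2 * (L1poly R r l)^`() = Ptr R r ^+ 2 + Ptr R l ^+ (2 ^ r) * Ptr R (r - 1) ^+ 2.
Proof.
case: r => // r r0; rewrite deriv_L1poly // subSS subn0.
have eS : \sum_(r.+1 <= k < r.+1 + l) 'X^(2 ^ k) = Ptr R l ^+ (2 ^ r.+1).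
  by rewrite Ptr_expr_pow2 -{1}[r.+1]add0n big_addn addKn big_mkord.
have eT : 'X^2 * \sum_(k < r.+1) 'X^(2 ^ k - 2) *+ (0 < k)%N = Ptr R r ^+ 2.
  rewrite mulr_sumr big_ord_recl mulr0n mulr0 add0r (Ptr_expr_pow2 r 1).
  apply: eq_bigr => i _; rewrite /= -exprD addn1 subnKC //.
  by rewrite expnS; have := expn_gt0 2 i; lia.
rewrite mulrDr mulrCA eT eS -exprD subnKC; last first.
  by rewrite expnS; have := expn_gt0 2 r; lia.
rewrite (Ptr_expr_pow2 r.+1 1) (Ptr_expr_pow2 r 1) big_ord_recr /= addn1.
ring.
Qed.

Lemma horner0_deriv_L1poly r l : (1 < r)%N -> (L1poly R r l)^`().[0] = 1.
Proof.
case: r => [|[|r]] // _; rewrite deriv_L1poly //.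
rewrite !hornerE !horner_sum big1 => [|k _]; last first.
  by rewrite hornerXn expr0n expn_eq0.
rewrite !big_ord_recl big1 => [|k _]; last first.
  rewrite hornerMn hornerXn expr0n /bump /=; case: eqP => // e0; exfalso.
  by move: e0; rewrite !expnS; have := expn_gt0 2 k; lia.
rewrite !hornerMn !hornerXn !expr0n /= mulr0n addr0 add0r mul1r.
suff -> : (2 ^ r.+2 - 2 == 0)%N = false by rewrite add0r.
by apply/negbTE; rewrite !expnS; have := expn_gt0 2 r; lia.
Qed.

End Char2Poly.

Section Composition.
Variable R : idomainType.

Let y : {poly R} := 'X * ('X + 1).

Lemma size_XmulXD1 : size y = 3%N.
Proof.
have sX1 : size ('X + 1 : {poly R}) = 2%N by rewrite -polyC1 size_XaddC.
by rewrite size_mul ?sX1 ?size_polyX // -size_poly_eq0 ?sX1 ?size_polyX.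
Qed.

Lemma comp_XmulXD1_inj (p q : {poly R}) : p \Po y = q \Po y -> p = q.
Proof.
move=> pq; apply/eqP; rewrite -subr_eq0 -(@comp_poly_eq0 _ _ y) ?size_XmulXD1 //.
by rewrite rmorphB /= pq subrr.
Qed.

Lemma size_comp_XmulXD1 (p : {poly R}) : (size (p \Po y)).-1 = ((size p).-1 * 2)%N.
Proof. by rewrite size_comp_poly size_XmulXD1. Qed.

Hypothesis pchar2 : (2 \in [pchar R])%N.

Lemma comp_L1poly r l (m := (2 ^ r * (2 ^ l + 1))%N) :
  L1poly R r l \Po y = ('X + 1) ^+ (m - 1) + 'X ^+ (m - 1).
Proof.
have pchar2P : (2 \in [pchar {poly R}])%N by rewrite pchar_poly.
have m0 : (0 < m)%N by rewrite muln_gt0 expn_gt0 addn1.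
have yn0 : y != 0 by rewrite -size_poly_eq0 size_XmulXD1.
have compXn n : 'X^n \Po y = y ^+ n by rewrite rmorphXn /= comp_polyX.
set x : {poly R} := 'X.
rewrite /L1poly rmorphD rmorphM rmorphD rmorph1 !rmorph_sum /= compXn.
under eq_bigr => k _ do rewrite compXn.
under [X in _ * X]eq_bigr => k _ do rewrite compXn.
apply: (mulfI yn0).
have hS : \sum_(r <= k < r + l) y ^+ (2 ^ k) = x ^+ (2 ^ (r + l)) + x ^+ (2 ^ r).
  by rewrite sum_pow2_mul_addr1 ?leq_addr.
have hT : y * \sum_(k < r) y ^+ (2 ^ k - 1) = x ^+ (2 ^ r) + x.
  rewrite -[x in RHS]expr1 -(expn0 2) -(sum_pow2_mul_addr1 pchar2P x (leq0n r)).
  rewrite big_mkord mulr_sumr; apply: eq_bigr => k _.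
  by rewrite -exprS subn1 prednK ?expn_gt0.
have hY : y * y ^+ (2 ^ r - 1) = x ^+ (2 ^ r) * (x ^+ (2 ^ r) + 1).
  by rewrite -exprS subn1 prednK ?expn_gt0 // exprMn exprD_pow2_pchar2 // expr1n.
have hR1 : y * (x + 1) ^+ (m - 1) = x * (x + 1) ^+ m.
  by rewrite /y -mulrA -exprS subn1 prednK.
have hR2 : y * x ^+ (m - 1) = (x + 1) * x ^+ m.
  by rewrite /y mulrAC -exprS subn1 prednK // mulrC.
rewrite mulrDr hY mulrCA hT hS [RHS]mulrDr hR1 hR2 /m !exprM.
rewrite exprD_pow2_pchar2 // expr1n expnD exprM !exprD !expr1 exprD_pow2_pchar2 // expr1n.
set a := x ^+ (2 ^ r); set b := a ^+ (2 ^ l).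
by apply: (eq_pchar2 pchar2P (w := a ^+ 2 + a - x * a * b)); ring.
Qed.

End Composition.

Lemma horner_Ptr_eq0S (F : idomainType) k (t : F) :
  (Ptr F k).[t] = 0 -> (Ptr F k.+1).[t] = 0 -> t = 0.
Proof.
move=> Pk0; rewrite horner_PtrS Pk0 add0r => /eqP.
by rewrite expf_eq0 expn_gt0 => /eqP.
Qed.

Section DerivRoots.
Variable F : idomainType.
Hypothesis pchar2 : (2 \in [pchar F])%N.
Variables r l : nat.
Hypothesis r_gt1 : (1 < r)%N.

Lemma root_deriv_L1poly_Ptr t : root (L1poly F r l)^`() t ->
  (Ptr F r).[t] = (Ptr F l).[t] ^+ (2 ^ (r - 1)) * (Ptr F (r - 1)).[t].
Proof.
move=> /eqP Dt.
have := congr1 (horner^~ t) (mulX2_deriv_L1poly pchar2 l (ltnW r_gt1)).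
rewrite hornerM Dt mulr0 hornerD horner_exp hornerM !horner_exp.
rewrite -[in (2 ^ r)%N](subnK (ltnW r_gt1)) expnD exprM -exprMn.
rewrite -(exprD_pow2_pchar2 pchar2 1) => /esym/eqP.
by rewrite expf_eq0 /= addr_eq0 (oppr_pchar2 pchar2) => /eqP.
Qed.

Lemma root_deriv_L1poly_Ptr_neq0 t : root (L1poly F r l)^`() t ->
  (Ptr F (r - 1)).[t] != 0.
Proof.
move=> Dt; apply/eqP => P0.
have Pr0 : (Ptr F (r - 1).+1).[t] = 0.
  by rewrite subn1 prednK ?(ltnW r_gt1) // (root_deriv_L1poly_Ptr Dt) P0 mulr0.
move: Dt; rewrite /root (horner_Ptr_eq0S P0 Pr0) horner0_deriv_L1poly //.
by rewrite oner_eq0.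
Qed.

End DerivRoots.

Section DerivRootsField.
Variable F : fieldType.
Hypothesis pchar2 : (2 \in [pchar F])%N.
Variables r l : nat.
Hypothesis r_gt1 : (1 < r)%N.

Lemma root_deriv_L1poly_ratio t : root (L1poly F r l)^`() t ->
  (Ptr F r).[t] / (Ptr F (r - 1)).[t] = (Ptr F l).[t] ^+ (2 ^ (r - 1)).
Proof.
move=> Dt; rewrite (root_deriv_L1poly_Ptr pchar2 r_gt1 Dt) mulfK //.
exact: root_deriv_L1poly_Ptr_neq0 Dt.
Qed.

Lemma root_deriv_L1poly_ratio_add ti tj :
    root (L1poly F r l)^`() ti -> root (L1poly F r l)^`() tj ->
    ti != tj -> (Ptr F l).[ti + tj] = 0 ->
  (Ptr F (r - 1)).[ti + tj] != 0 /\
  (Ptr F r).[ti + tj] / (Ptr F (r - 1)).[ti + tj] = (Ptr F l).[ti] ^+ (2 ^ (r - 1)).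
Proof.
move=> Di Dj tij Pl0.
have Psum : (Ptr F r).[ti + tj]
    = (Ptr F l).[ti] ^+ (2 ^ (r - 1)) * (Ptr F (r - 1)).[ti + tj].
  rewrite !(horner_PtrD pchar2) mulrDr (root_deriv_L1poly_Ptr pchar2 r_gt1 Di).
  by rewrite (root_deriv_L1poly_Ptr pchar2 r_gt1 Dj) (horner_Ptr_add_eq0 pchar2 Pl0).
have P0 : (Ptr F (r - 1)).[ti + tj] != 0.
  apply/eqP => P0; apply/negP: tij; apply/negPn.
  have Pr0 : (Ptr F (r - 1).+1).[ti + tj] = 0.
    by rewrite subn1 prednK ?(ltnW r_gt1) // Psum P0 mulr0.
  by rewrite -subr_eq0 (GRing.subr_pchar2 pchar2) (horner_Ptr_eq0S P0 Pr0).
by split=> //; rewrite Psum mulfK.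
Qed.

End DerivRootsField.

Lemma map_L1poly (R S : nzSemiRingType) (f : {rmorphism R -> S}) r l :
  map_poly f (L1poly R r l) = L1poly S r l.
Proof.
rewrite /L1poly rmorphD rmorphM rmorphD rmorph1 !rmorph_sum /= map_polyXn.
by congr (_ + (1 + _) * _); apply: eq_bigr => k _; rewrite map_polyXn.
Qed.

Lemma pchar2_F2 : (2 \in [pchar 'F_2])%N.
Proof. exact: pchar_Fp. Qed.

Lemma is_L1_L1poly r l : (0 < r)%N -> is_L1 (2 ^ r * (2 ^ l + 1)) (L1poly _ r l).
Proof.
move=> r0; set m := (2 ^ r * (2 ^ l + 1))%N.
have m_even : m = (2 ^ (r - 1) * (2 ^ l + 1) * 2)%N.
  by rewrite /m mulnAC -expnSr subn1 prednK.
split; last exact: comp_L1poly pchar2_F2 r l.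
have sizeR : (size (('X + 1 : {poly 'F_2}) ^+ (m - 1) + 'X ^+ (m - 1))%R <= m)%N.
  rewrite (leq_trans (size_polyD _ _)) // geq_max size_polyXn.
  rewrite (leq_trans (size_poly_exp_leq _ _)) -?polyC1 ?size_XaddC; lia.
have := size_comp_XmulXD1 (L1poly 'F_2 r l); rewrite comp_L1poly ?pchar2_F2 //.
by move: sizeR; rewrite -/m; move: (size _) (size _) => s t; lia.
Qed.

Lemma is_L1_eq_L1poly r l Q : is_L1 (2 ^ r * (2 ^ l + 1)) Q -> Q = L1poly _ r l.
Proof.
by case=> _ compQ; apply: comp_XmulXD1_inj; rewrite compQ comp_L1poly ?pchar2_F2.
Qed.

Theorem lemma3p3 (r l : nat) (hr : (2 <= r)%N) (hl : (1 <= l)%N) :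
  let m := (2 ^ r * (2 ^ l + 1))%N in
  (exists Q, is_L1 m Q) /\
  forall Q : {poly 'F_2}, is_L1 m Q ->
  [/\ (* (i) *)
      Q = 'X^(2 ^ r - 1)
          + (1 + \sum_(r <= k < r + l) 'X^(2 ^ k)) * \sum_(k < r) 'X^(2 ^ k - 1),
      (* (ii) *)
      'X ^+ 2 * Q^`() = Ptr _ r ^+ 2 + Ptr _ l ^+ (2 ^ r) * Ptr _ (r - 1) ^+ 2,
      (* (iii) *)
      forall tau : F2bar, root (map_poly F2emb Q^`()) tau ->
        (Ptr F2bar (r - 1)).[tau] != 0
    & (* (iv) *)
      forall ti tj : F2bar,
        root (map_poly F2emb Q^`()) ti -> root (map_poly F2emb Q^`()) tj ->
        ti != tj -> (Ptr F2bar l).[ti + tj] = 0 ->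
        (Ptr F2bar (r - 1)).[ti + tj] != 0 /\
        [/\ (Ptr F2bar l).[ti] ^+ (2 ^ (r - 1))
              = (Ptr F2bar r).[ti] / (Ptr F2bar (r - 1)).[ti],
            (Ptr F2bar r).[ti] / (Ptr F2bar (r - 1)).[ti]
              = (Ptr F2bar r).[ti + tj] / (Ptr F2bar (r - 1)).[ti + tj],
            (Ptr F2bar r).[ti + tj] / (Ptr F2bar (r - 1)).[ti + tj]
              = (Ptr F2bar r).[tj] / (Ptr F2bar (r - 1)).[tj]
          & (Ptr F2bar r).[tj] / (Ptr F2bar (r - 1)).[tj]
              = (Ptr F2bar l).[tj] ^+ (2 ^ (r - 1))]].
Proof.
move=> m; have r0 := ltnW hr.
have pchar2_F2bar : (2 \in [pchar F2bar])%N := rmorph_pchar F2emb pchar2_F2.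
split=> [|Q /is_L1_eq_L1poly ->]; first by exists (L1poly _ r l); apply: is_L1_L1poly.
rewrite -deriv_map map_L1poly; split=> //.
- by rewrite (mulX2_deriv_L1poly pchar2_F2).
- by move=> t; apply: root_deriv_L1poly_Ptr_neq0.
move=> ti tj Di Dj tij Pl0.
have [P0 ->] := root_deriv_L1poly_ratio_add pchar2_F2bar hr Di Dj tij Pl0.
rewrite (root_deriv_L1poly_ratio pchar2_F2bar hr Di).
rewrite (root_deriv_L1poly_ratio pchar2_F2bar hr Dj).
by rewrite (horner_Ptr_add_eq0 pchar2_F2bar Pl0).
Qed.
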